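(* For the logic $\mathsf{PWK}_e^{\square}$, it holds that $\Gamma\vdash\varphi$ iff there exist some formulas $\gamma_1,\dots,\gamma_n\in \Gamma$ such that $\vdash\neg J_{0}\gamma_1\wedge\dots\wedge\neg J_{0}\gamma_n\to \neg J_{0}\varphi$.
   Context: Formulas are built over a denumerable set of propositional variables in the language $\neg,\vee,J_{2},\square,0,1$ of type $(1,2,1,1,0,0)$, where $J_2\varphi$ reads ''$\varphi$ is true''. Abbreviations: $\varphi\land\psi:=\neg(\neg\varphi\lor\neg\psi)$, $\varphi\to\psi:=\neg\varphi\lor\psi$, $\varphi\leftrightarrow\psi:=(\varphi\to\psi)\land(\psi\to\varphi)$, $J_0\varphi:=J_2\neg\varphi$, $J_1\varphi:=\neg(J_2\varphi\lor J_2\neg\varphi)$, $+\varphi:=\neg J_1\varphi$, $\varphi\equiv\psi:=(J_2\varphi\leftrightarrow J_2\psi)\land(J_0\varphi\leftrightarrow J_0\psi)$, $\diamond\varphi:=\neg\square\neg\varphi$. The logic $\mathsf{PWK}_e^{\square}$ (with consequence relation $\vdash$) is given by the Hilbert-style axiomatization with axioms: $\varphi\lor\varphi\equiv\varphi$; $\varphi\lor\psi\equiv\psi\lor\varphi$; $(\varphi\lor\psi)\lor\chi\equiv\varphi\lor(\psi\lor\chi)$; $\varphi\lor 0\equiv\varphi$; $\neg\neg\varphi\equiv\varphi$; $\neg(\varphi\lor\psi)\equiv\neg\varphi\land\neg\psi$; $\neg 1\equiv 0$; $\varphi\land(\psi\lor\chi)\equiv(\varphi\land\psi)\lor(\varphi\land\chi)$;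 $J_0J_2\varphi\leftrightarrow\neg J_2\varphi$; $J_2\varphi\leftrightarrow\neg(J_0\varphi\lor J_1\varphi)$; $J_2\varphi\lor\neg J_2\varphi\leftrightarrow 1$; $J_2(\varphi\lor\psi)\leftrightarrow(J_2\varphi\land J_2\psi)\lor(J_2\varphi\land J_0\psi)\lor(J_0\varphi\land J_2\psi)$; $\square(J_2\varphi\to J_2\psi)\to(\square J_2\varphi\to\square J_2\psi)$; $\square\varphi\leftrightarrow\square\neg J_0\varphi$; $+\varphi\leftrightarrow+\square\varphi$; and rules: $J_2\varphi\leftrightarrow J_2\psi,\ J_0\varphi\leftrightarrow J_0\psi\vdash\varphi\equiv\psi$; $\varphi\dashv\vdash\neg J_0\varphi\leftrightarrow 1$; necessitation: if $\vdash\varphi$ then $\vdash\square\varphi$. Its propositional base is external paraconsistent weak Kleene logic, the logic of the three-element weak Kleene matrix with designated values $\{1,1/2\}$ (non-falsity preservation). *)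

From Stdlib Require Import List.
Import ListNotations.
Set Implicit Arguments.

Inductive form : Type :=
| Var  : nat -> form
| Neg  : form -> form
| Or   : form -> form -> form
| J2   : form -> form
| Box  : form -> form
| Zero : form
| One  : form.

Definition And (p q : form) : form := Neg (Or (Neg p) (Neg q)).
Definition Imp (p q : form) : form := Or (Neg p) q.
Definition Iff (p q : form) : form := And (Imp p q) (Imp q p).
Definition J0 (p : form) : form := J2 (Neg p).
Definition J1 (p : form) : form := Neg (Or (J2 p) (J2 (Neg p))).
Definition Plus (p : form) : form := Neg (J1 p).
Definition Equiv (p q : form) : form :=
  And (Iff (J2 p) (J2 q)) (Iff (J0 p) (J0 q)).
Definition Dia (p : form) : form := Neg (Box (Neg p)).

Inductive axiom : form -> Prop :=
| ax1  p       : axiom (Equiv (Or p p) p)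
| ax2  p q     : axiom (Equiv (Or p q) (Or q p))
| ax3  p q r   : axiom (Equiv (Or (Or p q) r) (Or p (Or q r)))
| ax4  p       : axiom (Equiv (Or p Zero) p)
| ax5  p       : axiom (Equiv (Neg (Neg p)) p)
| ax6  p q     : axiom (Equiv (Neg (Or p q)) (And (Neg p) (Neg q)))
| ax7          : axiom (Equiv (Neg One) Zero)
| ax8  p q r   : axiom (Equiv (And p (Or q r)) (Or (And p q) (And p r)))
| ax9  p       : axiom (Iff (J0 (J2 p)) (Neg (J2 p)))
| ax10 p       : axiom (Iff (J2 p) (Neg (Or (J0 p) (J1 p))))
| ax11 p       : axiom (Iff (Or (J2 p) (Neg (J2 p))) One)
| ax12 p q     : axiom (Iff (J2 (Or p q))
                            (Or (Or (And (J2 p) (J2 q)) (And (J2 p) (J0 q)))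
                                (And (J0 p) (J2 q))))
| axK  p q     : axiom (Imp (Box (Imp (J2 p) (J2 q)))
                            (Imp (Box (J2 p)) (Box (J2 q))))
| axB  p       : axiom (Iff (Box p) (Box (Neg (J0 p))))
| axP  p       : axiom (Iff (Plus p) (Plus (Box p))).

(* The three-element weak Kleene matrix, designated {1, 1/2}. *)
Inductive val : Type := V0 | Vh | V1.

Definition vneg (a : val) : val :=
  match a with V0 => V1 | Vh => Vh | V1 => V0 end.
Definition vor (a b : val) : val :=
  match a, b with
  | Vh, _ | _, Vh => Vh
  | V0, V0 => V0
  | _, _ => V1
  end.
Definition vJ2 (a : val) : val := match a with V1 => V1 | _ => V0 end.
Definition desig (a : val) : Prop := a <> V0.

(* Evaluation of formulas in the propositional base: variables and
   box-formulas (treated as propositionally atomic) get arbitrary values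
   from e; all other connectives are interpreted in the matrix. *)
Fixpoint eval (e : form -> val) (p : form) : val :=
  match p with
  | Var n => e (Var n)
  | Box q => e (Box q)
  | Neg q => vneg (eval e q)
  | Or q r => vor (eval e q) (eval e r)
  | J2 q => vJ2 (eval e q)
  | Zero => V0
  | One => V1
  end.

(* Finitary rules of the propositional base PWK_e (substitution instances):
   Delta |= phi in the weak Kleene matrix with designated {1,1/2}. *)
Definition base_valid (Delta : list form) (phi : form) : Prop :=
  forall e : form -> val,
    (forall d, In d Delta -> desig (eval e d)) -> desig (eval e phi).

Inductive deriv : (form -> Prop) -> form -> Prop :=
| d_hyp  (G : form -> Prop) p : G p -> deriv G p
| d_ax   (G : form -> Prop) p : axiom p -> deriv G p
| d_base (G : form -> Prop) (Delta : list form) p :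
    base_valid Delta p -> (forall d, In d Delta -> deriv G d) -> deriv G p
| d_equiv (G : form -> Prop) p q :
    deriv G (Iff (J2 p) (J2 q)) -> deriv G (Iff (J0 p) (J0 q)) ->
    deriv G (Equiv p q)
| d_toJ  (G : form -> Prop) p : deriv G p -> deriv G (Iff (Neg (J0 p)) One)
| d_fromJ (G : form -> Prop) p : deriv G (Iff (Neg (J0 p)) One) -> deriv G p
| d_nec  (G : form -> Prop) p :
    deriv (fun _ => False) p -> deriv G (Box p).

Definition theorem (p : form) : Prop := deriv (fun _ => False) p.

Fixpoint bigAnd (l : list form) : form :=
  match l with
  | [] => One
  | [a] => a
  | a :: l' => And a (bigAnd l')
  end.

(* The formula ¬J0 φ is two-valued: it takes the value 1 when φ is designated
   and 0 otherwise.  Conjunctions and implications between such formulas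
   therefore behave classically, so ¬J0 γ1 ∧ … ∧ ¬J0 γn → ¬J0 φ is designated
   under a valuation exactly when "all γi designated implies φ designated"
   holds there.  Hence the set of φ admitting such a theorem with γi ∈ Γ
   contains Γ and all theorems, and is closed under every rule of the calculus
   (each non-necessitation rule is a valid rule of the weak Kleene matrix),
   which gives the forward direction.  Conversely, that theorem together with
   γ1, …, γn entails φ in the matrix, so φ follows by a base rule. *)

From Stdlib Require Import List.
Import ListNotations.

Definition NJ (g : form) : form := Neg (J0 g).

Definition NJs (l : list form) : form := bigAnd (map NJ l).

Definition sat (e : form -> val) (l : list form) : Prop :=
  forall d, In d l -> desig (eval e d).

Lemma sat_nil e : sat e [].
Proof. intros d []. Qed.

Lemma sat_cons e d l : sat e (d :: l) <-> desig (eval e d) /\ sat e l.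
Proof.
  split.
  - intros H; split; [apply H, in_eq | intros x Hx; apply H, in_cons, Hx].
  - intros [Hd Hl] x [<- | Hx]; auto.
Qed.

Lemma sat_app e l1 l2 : sat e (l1 ++ l2) <-> sat e l1 /\ sat e l2.
Proof.
  split.
  - intros H; split; intros x Hx; apply H, in_or_app; auto.
  - intros [H1 H2] x Hx; apply in_app_or in Hx as [Hx | Hx]; auto.
Qed.

Lemma desig_vor_vneg a b : a <> Vh -> desig (vor (vneg a) b) <-> (desig a -> desig b).
Proof. unfold desig; destruct a, b; cbn; intuition congruence. Qed.

Lemma eval_NJ e g :
  eval e (NJ g) <> Vh /\ (desig (eval e (NJ g)) <-> desig (eval e g)).
Proof. cbn; unfold desig; destruct (eval e g); cbn; intuition congruence. Qed.

(* bigAnd [x] is x itself, but semantically it agrees with And x One. *)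
Lemma eval_bigAnd_cons e x l : eval e (bigAnd (x :: l)) = eval e (And x (bigAnd l)).
Proof. destruct l; cbn; [destruct (eval e x)|]; reflexivity. Qed.

Lemma eval_NJs e l : eval e (NJs l) <> Vh /\ (desig (eval e (NJs l)) <-> sat e l).
Proof.
  unfold NJs; induction l as [| g l [IHtwo IHdesig]].
  - split; [discriminate | split; [intros; apply sat_nil | discriminate]].
  - rewrite sat_cons, <- IHdesig; cbn [map]; rewrite eval_bigAnd_cons.
    destruct (eval_NJ e g) as [NJtwo NJdesig]; rewrite <- NJdesig.
    revert IHtwo NJtwo; unfold And, desig; cbn [eval].
    destruct (eval e (bigAnd (map NJ l))), (eval e (NJ g)); cbn; intuition congruence.
Qed.

Lemma desig_Imp_NJs e gs ds :
  desig (eval e (Imp (NJs gs) (NJs ds))) <-> (sat e gs -> sat e ds).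
Proof.
  destruct (eval_NJs e gs) as [gs_two gs_desig], (eval_NJs e ds) as [_ ds_desig].
  unfold Imp; cbn [eval]; rewrite desig_vor_vneg, gs_desig, ds_desig by exact gs_two.
  reflexivity.
Qed.

Lemma deriv_Imp_NJs {G} Delta gs ds :
  (forall d, In d Delta -> deriv G d) ->
  (forall e, sat e Delta -> sat e gs -> sat e ds) ->
  deriv G (Imp (NJs gs) (NJs ds)).
Proof.
  intros HDelta Hsem; apply (d_base (Delta := Delta)); [| exact HDelta].
  intros e He; apply desig_Imp_NJs; exact (Hsem e He).
Qed.

Lemma deriv_weaken {G0 G p} :
  deriv G0 p -> (forall x, G0 x -> G x) -> deriv G p.
Proof.
  intros H; revert G; induction H; intros G' HG.
  - apply d_hyp; auto.
  - apply d_ax; auto.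
  - apply (d_base (Delta := Delta)); auto.
  - apply d_equiv; auto.
  - apply d_toJ; auto.
  - apply d_fromJ; auto.
  - apply d_nec; auto.
Qed.

Lemma equiv_rule_valid p q :
  base_valid [Iff (J2 p) (J2 q); Iff (J0 p) (J0 q)] (Equiv p q).
Proof.
  intros e He; pose proof (He _ (in_eq _ _)) as H1.
  pose proof (He _ (in_cons _ _ _ (in_eq _ _))) as H2; revert H1 H2.
  cbn; unfold desig; destruct (eval e p), (eval e q); cbn; congruence.
Qed.

Lemma toJ_rule_valid p : base_valid [p] (Iff (Neg (J0 p)) One).
Proof.
  intros e He; specialize (He _ (in_eq _ _)); revert He.
  cbn; unfold desig; destruct (eval e p); cbn; congruence.
Qed.

Lemma fromJ_rule_valid p : base_valid [Iff (Neg (J0 p)) One] p.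
Proof.
  intros e He; specialize (He _ (in_eq _ _)); revert He.
  cbn; unfold desig; destruct (eval e p); cbn; congruence.
Qed.

Definition finitely_entailed (G : form -> Prop) (phi : form) : Prop :=
  exists gs, (forall g, In g gs -> G g) /\ theorem (Imp (NJs gs) (NJ phi)).

Lemma finitely_entailed_hyp {G p} : G p -> finitely_entailed G p.
Proof.
  intros Hp; exists [p]; split; [intros g [<- | []]; exact Hp |].
  apply (deriv_Imp_NJs [] [p] [p]); [intros _ [] | auto].
Qed.

Lemma finitely_entailed_theorem G {p} : theorem p -> finitely_entailed G p.
Proof.
  intros Hp; exists []; split; [intros _ [] |].
  apply (deriv_Imp_NJs [p] [] [p]); [intros d [<- | []]; exact Hp | auto].
Qed.

Lemma finitely_entailed_list {G} Delta :
  (forall d, In d Delta -> finitely_entailed G d) ->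
  exists gs, (forall g, In g gs -> G g) /\ theorem (Imp (NJs gs) (NJs Delta)).
Proof.
  induction Delta as [| d Delta IH]; intros HDelta.
  - exists []; split; [intros _ [] |].
    apply (deriv_Imp_NJs [] [] []); [intros _ [] | auto].
  - destruct (HDelta d (in_eq _ _)) as (gs1 & HG1 & Ht1).
    destruct IH as (gs2 & HG2 & Ht2); [intros x Hx; apply HDelta, in_cons, Hx |].
    exists (gs1 ++ gs2); split.
    + intros g Hg; apply in_app_or in Hg as [Hg | Hg]; auto.
    + apply (deriv_Imp_NJs [Imp (NJs gs1) (NJs [d]); Imp (NJs gs2) (NJs Delta)]).
      * intros t [<- | [<- | []]]; assumption.
      * intros e He Hgs; apply sat_app in Hgs as [Hgs1 Hgs2].
        apply sat_cons in He as [He1 He]; apply sat_cons in He as [He2 _].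
        apply sat_cons; split.
        -- exact (proj1 (desig_Imp_NJs e gs1 [d]) He1 Hgs1 _ (in_eq _ _)).
        -- exact (proj1 (desig_Imp_NJs e gs2 Delta) He2 Hgs2).
Qed.

Lemma finitely_entailed_base {G} Delta p :
  (forall d, In d Delta -> finitely_entailed G d) -> base_valid Delta p ->
  finitely_entailed G p.
Proof.
  intros HDelta Hvalid.
  destruct (finitely_entailed_list Delta HDelta) as (gs & HG & Ht).
  exists gs; split; [exact HG |].
  apply (deriv_Imp_NJs [Imp (NJs gs) (NJs Delta)] gs [p]).
  - intros t [<- | []]; exact Ht.
  - intros e He Hgs; apply sat_cons in He as [He _].
    intros x [<- | []]; exact (Hvalid e (proj1 (desig_Imp_NJs e gs Delta) He Hgs)).
Qed.

Lemma finitely_entailed_of_deriv G phi : deriv G phi -> finitely_entailed G phi.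
Proof.
  induction 1 as [G p Hp | G p Hax | G Delta p Hvalid _ IH
                 | G p q _ IH1 _ IH2 | G p _ IH | G p _ IH | G p Hthm _].
  - exact (finitely_entailed_hyp Hp).
  - exact (finitely_entailed_theorem G (d_ax _ Hax)).
  - exact (finitely_entailed_base Delta p IH Hvalid).
  - apply (finitely_entailed_base [Iff (J2 p) (J2 q); Iff (J0 p) (J0 q)]).
    + intros d [<- | [<- | []]]; assumption.
    + apply equiv_rule_valid.
  - apply (finitely_entailed_base [p]).
    + intros d [<- | []]; exact IH.
    + apply toJ_rule_valid.
  - apply (finitely_entailed_base [Iff (Neg (J0 p)) One]).
    + intros d [<- | []]; exact IH.
    + apply fromJ_rule_valid.
  - exact (finitely_entailed_theorem G (d_nec _ Hthm)).
Qed.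

Lemma deriv_of_finitely_entailed G phi : finitely_entailed G phi -> deriv G phi.
Proof.
  intros (gs & HG & Ht).
  apply (d_base (Delta := Imp (NJs gs) (NJ phi) :: gs)).
  - intros e He; apply sat_cons in He as [Himp Hgs].
    exact (proj1 (desig_Imp_NJs e gs [phi]) Himp Hgs _ (in_eq _ _)).
  - intros d [<- | Hd]; [apply (deriv_weaken Ht); intros _ [] | apply d_hyp, HG, Hd].
Qed.

Theorem mainTheorem20 (G : form -> Prop) (phi : form) :
  deriv G phi <->
  exists gs : list form,
    (forall g, In g gs -> G g) /\
    theorem (Imp (bigAnd (map (fun g => Neg (J0 g)) gs)) (Neg (J0 phi))).
Proof.
  split.
  - apply finitely_entailed_of_deriv.
  - apply deriv_of_finitely_entailed.
Qed.
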